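(* Fix $c \in \mathbb{R}$ and $p \in (0,1)$. For each $x^{\text{obs}} > c$ let $\theta(p) = \theta(p; x^{\text{obs}}, c)$ be the unique $\theta \in \mathbb{R}$ solving $F(x^{\text{obs}}; \theta, c) = p$. Then $\theta(p) \to -\infty$ as $x^{\text{obs}} \downarrow c$.
   Context: Let $\Phi$ denote the standard normal distribution function. For $c \in \mathbb{R}$, $a \ge c$ and $\theta \in \mathbb{R}$ define $$F(a;\theta,c) = \frac{\Phi(a-\theta) - \Phi(c-\theta)}{1-\Phi(c-\theta)},$$ which is the distribution function $\Pr(X \le a \mid X \ge c)$ of $X \sim N(\theta,1)$ conditional on $X \ge c$. It is known that for each fixed $x^{\text{obs}} > c$ the map $\theta \mapsto F(x^{\text{obs}};\theta,c)$ is continuous and strictly decreasing from $\mathbb{R}$ onto $(0,1)$, so $\theta(p)$ is well defined for every $p\in(0,1)$. *)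

From Stdlib Require Import Reals.
From Coquelicot Require Import Coquelicot.
Open Scope R_scope.

Definition phi_density (t : R) : R := / sqrt (2 * PI) * exp (- (t ^ 2) / 2).

Definition Phi (x : R) : R :=
  RInt_gen phi_density (Rbar_locally m_infty) (at_point x).

Definition F (a theta c : R) : R :=
  (Phi (a - theta) - Phi (c - theta)) / (1 - Phi (c - theta)).

From Stdlib Require Import Reals Lra.
From Coquelicot Require Import Coquelicot.
From HB Require Import structures.
From mathcomp Require all_boot all_order all_algebra.
From mathcomp Require all_classical all_reals all_analysis.
From mathcomp Require Rstruct Rstruct_topology measurable_realfun.
Open Scope R_scope.

(* If theta(x) stayed >= M along a sequence x -> c+, the denominator
   1 - Phi(c - theta) of F would stay >= 1 - Phi(c - M) > 0, while the
   numerator is at most x - c because the normal density is bounded by 1;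
   so F(x; theta, c) -> 0, contradicting F = p > 0.  The only analytic input
   is that Phi is a well-defined distribution function with values < 1, which
   rests on the Gaussian integral. *)

(* The Gaussian integral is only available in mathcomp-analysis, for its own
   [pi], [expR] and Lebesgue integral; this module transports it to Stdlib's
   [PI], [exp] and derivatives via a primitive of exp(-t^2). *)
Module Gauss.
Import all_boot all_order all_algebra.
Import all_classical all_reals all_analysis.
Import Rstruct Rstruct_topology measurable_realfun.
Import Order.TTheory GRing.Theory Num.Theory.
Local Open Scope classical_set_scope.
Import numFieldNormedType.Exports.
Local Open Scope ring_scope.

Lemma RcosE (x : R) : Rtrigo_def.cos x = cos x.
Proof.
rewrite /Rtrigo_def.cos; case: exist_cos => y; rewrite /cos_in /infinite_sum => cos_ub.
suff cvg_y : series (cos_coeff' x) @ \oo --> y.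
  exact: cvg_unique cvg_y (@cvg_cos_coeff' R x).
apply/cvgrPdist_lt => /= e /RltP /cos_ub[N Ncos_ub].
near=> n.
have nN : (n.-1 >= N)%coq_nat.
  apply/ssrnat.leP; near: n; exists N.+1 => //= k /= Nk.
  by rewrite -ltnS prednK //; exact: leq_ltn_trans Nk.
have n0 : (0 < n)%N by near: n; exists 1%N.
move: Ncos_ub => /(_ _ nN) /[!RdistE] /RltP /=.
rewrite distrC sum_f_R0E prednK //= => H; congr (`| _ - _ | < e): H.
apply: eq_bigr => k _.
rewrite /cos_coeff' /cos_n RdivE RpowE INRE factE RpowE /Rsqr -[(x * x)%coqR]/(x ^+ 2).
rewrite mulrAC -exprM -exprnP -[(2 * k)%coq_nat]/(2 * k)%N mul2n.
by congr (_ * _ * _); rewrite -[(-1)%coqR]/(Ropp 1) RoppE.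
Unshelve. all: by end_near.
Qed.

(* PI / 2 and pi / 2 are both the unique zero of cos in [0, 2]. *)
Lemma RPIE : PI = pi.
Proof.
have R2E : IZR 2 = 2 by [].
have /andP[PI2_ge0 PI2_le2] : 0 <= PI / 2 <= 2.
  rewrite -R0E -R2E -RdivE; apply/andP; split; apply/RleP; have := PI2_1; have := PI_4; lra.
have PI2E : PI / 2 = pi / 2.
  apply: cos_02_uniq; last exact: cos_pihalf.
  - by rewrite PI2_ge0 PI2_le2.
  - by rewrite -RcosE -R2E -RdivE cos_PI2.
  - by rewrite divr_ge0 ?pi_ge0 // ltW // pihalf_lt2.
have two_neq0 : 2 != 0 :> R by rewrite pnatr_eq0.
by rewrite -[PI](divfK two_neq0) PI2E divfK.
Qed.

Lemma derivable_pt_lim_derive1 (f : R^o -> R^o) (x l : R) :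
  derivable f x 1 -> derive1 f x = l -> derivable_pt_lim f x l.
Proof.
move=> df dfx; have := df.
rewrite /derivable -/(derive f x 1) -derive1E dfx => /cvgrPdist_lt cvg_l.
move=> e /RltP /cvg_l; rewrite /prop_near1 /= => /nbhs_ballP [d /= /RltP d0 Hd].
exists (mkposreal d d0) => h /eqP h0 hd.
have /Hd /(_ h0) : ball (0 : R^o) d h by rewrite /ball /= sub0r normrN -RabsE; exact/RltP.
rewrite /= distrC -RabsE [h%:A]mulr1 -[_ *: _]/(_ * _) mulrC (addrC h) => /RltP.
by rewrite RminusE RdivE.
Qed.

Lemma integrable_gauss_itv (a b : R) :
  (@lebesgue_measure R).-integrable `[a, b] (EFin \o gauss_fun).
Proof. exact: integrableS (@integrableT_gauss R). Qed.

Definition gauss_primitive (a x : R) : R :=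
  \int[@lebesgue_measure R]_(t in `[a, x]) gauss_fun t.

Lemma gauss_primitive_derive (a x : R) : (a < x)%coqR ->
  derivable_pt_lim (gauss_primitive a) x (Rtrigo_def.exp (- x ^ 2))%coqR.
Proof.
move=> /RltP ax; rewrite RexpE RpowE.
have x_lt : x < x + 1 by rewrite ltrDl.
have [df dfx] := continuous_FTC1_closed x_lt (integrable_gauss_itv a (x + 1)) ax
  (@continuous_gauss_fun R x).
exact: derivable_pt_lim_derive1 df dfx.
Qed.

Lemma gauss_primitive_bounds (a x : R) :
  (0 <= gauss_primitive a x /\ gauss_primitive a x <= sqrt PI)%coqR.
Proof.
rewrite RsqrtE RPIE; split; apply/RleP.
  by apply: Rintegral_ge0 => t _; exact: gauss_fun_ge0.
have le_total : (\int[@lebesgue_measure R]_(t in `[a, x]) (gauss_fun t)%:E <=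
    \int[@lebesgue_measure R]_(t in setT) (gauss_fun t)%:E)%E.
  apply: ge0_subset_integral => //.
  - by apply/measurable_EFinP; exact: measurable_gauss_fun.
  - by move=> t _; rewrite lee_fin gauss_fun_ge0.
rewrite integralT_gauss in le_total.
exact: fine_le (integrable_fin_num _ (integrable_gauss_itv a x)) _ le_total.
Qed.
End Gauss.

Definition gauss (t : R) : R := exp (- t ^ 2).

Lemma gauss_continuous (t : R) : continuous gauss t.
Proof.
  apply (ex_derive_continuous (V := R_NormedModule)).
  unfold gauss; auto_derive; auto.
Qed.

Lemma RInt_gauss_le_sqrt_PI (a b : R) : a <= b -> RInt gauss a b <= sqrt PI.
Proof.
  intros hab.
  (* Based at a - 1 so that the derivative is available on all of [a, b]. *)
  set (G := Gauss.gauss_primitive (a - 1)).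
  assert (HG : is_RInt gauss a b (G b - G a)).
  { apply (is_RInt_derive G gauss).
    - intros x hx. apply is_derive_Reals, Gauss.gauss_primitive_derive.
      rewrite Rmin_left in hx by lra. lra.
    - intros x _. apply gauss_continuous. }
  rewrite (is_RInt_unique _ _ _ _ HG).
  destruct (Gauss.gauss_primitive_bounds (a - 1) a).
  destruct (Gauss.gauss_primitive_bounds (a - 1) b).
  unfold G. lra.
Qed.

Lemma phi_density_continuous (t : R) : continuous phi_density t.
Proof.
  apply (ex_derive_continuous (V := R_NormedModule)).
  unfold phi_density; auto_derive; auto.
Qed.

Lemma ex_RInt_phi_density (a b : R) : ex_RInt phi_density a b.
Proof.
  apply (ex_RInt_continuous (V := R_CompleteNormedModule)).
  intros t _; apply phi_density_continuous.
Qed.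

Lemma phi_density_pos (t : R) : 0 < phi_density t.
Proof.
  unfold phi_density. apply Rmult_lt_0_compat; [|apply exp_pos].
  apply Rinv_0_lt_compat, sqrt_lt_R0. generalize PI_RGT_0; lra.
Qed.

Lemma phi_density_le_1 (t : R) : phi_density t <= 1.
Proof.
  unfold phi_density.
  assert (h2PI : 1 <= sqrt (2 * PI)).
  { rewrite <- sqrt_1. apply sqrt_le_1_alt. generalize PI2_1; lra. }
  assert (hexp : exp (- t ^ 2 / 2) <= 1).
  { rewrite <- exp_0.
    destruct (Rle_lt_or_eq_dec (- t ^ 2 / 2) 0) as [hlt | ->];
      [generalize (pow2_ge_0 t); lra | left; apply exp_increasing, hlt | lra]. }
  assert (hinv : / sqrt (2 * PI) <= 1).
  { rewrite <- Rinv_1. apply Rinv_le_contravar; lra. }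
  generalize (exp_pos (- t ^ 2 / 2)); nra.
Qed.

(* Stated in the shape expected by [RInt_comp_lin]. *)
Lemma phi_density_gauss (t : R) :
  phi_density t = / sqrt PI * scal (/ sqrt 2) (gauss (/ sqrt 2 * t + 0)).
Proof.
  assert (h2 : 0 < sqrt 2) by (apply sqrt_lt_R0; lra).
  assert (hPI : 0 < sqrt PI) by apply sqrt_lt_R0, PI_RGT_0.
  assert (hsq : sqrt 2 * sqrt 2 = 2) by (apply sqrt_sqrt; lra).
  unfold phi_density, gauss.
  replace ((/ sqrt 2 * t + 0) ^ 2) with (t ^ 2 / (sqrt 2 * sqrt 2))
    by (field; lra).
  rewrite hsq, sqrt_mult by (generalize PI_RGT_0; lra).
  change (scal ?u ?v) with (u * v).
  replace (- (t ^ 2 / 2)) with (- t ^ 2 / 2) by field.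
  field; lra.
Qed.

Lemma RInt_phi_density_le_1 (a b : R) : a <= b -> RInt phi_density a b <= 1.
Proof.
  intros hab.
  assert (h2 : 0 < / sqrt 2) by (apply Rinv_0_lt_compat, sqrt_lt_R0; lra).
  assert (hPI : 0 < sqrt PI) by apply sqrt_lt_R0, PI_RGT_0.
  rewrite (RInt_ext _ _ _ _ (fun t _ => phi_density_gauss t)).
  rewrite (RInt_scal (V := R_CompleteNormedModule) _ _ _ (/ sqrt PI)).
  2:{ apply (ex_RInt_continuous (V := R_CompleteNormedModule)).
      intros t _. apply (ex_derive_continuous (V := R_NormedModule)).
      unfold scal, gauss; simpl; unfold mult; simpl. auto_derive; auto. }
  rewrite (RInt_comp_lin (V := R_CompleteNormedModule)).
  2:{ apply (ex_RInt_continuous (V := R_CompleteNormedModule)).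
      intros t _; apply gauss_continuous. }
  assert (hgauss := RInt_gauss_le_sqrt_PI (/ sqrt 2 * a + 0) (/ sqrt 2 * b + 0)
                      ltac:(nra)).
  change (scal ?u ?v) with (u * v).
  apply (Rmult_le_compat_l (/ sqrt PI)) in hgauss;
    [|left; apply Rinv_0_lt_compat; exact hPI].
  rewrite Rinv_l in hgauss by lra. exact hgauss.
Qed.

(* The improper integral is the supremum of the integrals over [a, y]. *)
Lemma is_RInt_gen_m_infty_of_bounded (f : R -> R) (y B : R) :
  (forall a b, ex_RInt f a b) -> (forall t, 0 <= f t) ->
  (forall a, a <= y -> RInt f a y <= B) ->
  exists L, L <= B /\ is_RInt_gen f (Rbar_locally m_infty) (at_point y) L.
Proof.
  intros hex hpos hB.
  assert (mono : forall a a', a <= a' -> RInt f a' y <= RInt f a y).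
  { intros a a' haa'.
    rewrite <- (RInt_Chasles (V := R_CompleteNormedModule) f a a' y) by apply hex.
    assert (0 <= RInt f a a') by (apply RInt_ge_0; auto).
    change (plus ?u ?v) with (u + v); lra. }
  set (E := fun z => exists a, a <= y /\ z = RInt f a y).
  assert (hbound : is_upper_bound E B) by (intros z (a & ha & ->); auto).
  destruct (completeness E (ex_intro _ B hbound) (ex_intro _ _ (ex_intro _ y (conj (Rle_refl y) eq_refl))))
    as [L [hL hLmin]].
  exists L; split; [now apply hLmin|].
  intros P [eps hP].
  assert (ha0 : exists a0, a0 <= y /\ L - eps < RInt f a0 y).
  { apply Classical_Prop.NNPP; intros hnot.
    assert (L <= L - eps).
    { apply hLmin; intros z (a & ha & ->).
      apply Rnot_lt_le; intros hlt; apply hnot; eauto. }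
    destruct eps; simpl in *; lra. }
  destruct ha0 as (a0 & ha0y & ha0).
  apply (Filter_prod _ _ _ (fun a => a < a0) (fun b => b = y)).
  - exists a0; auto.
  - reflexivity.
  - intros a b ha ->. exists (RInt f a y).
    split; [apply (RInt_correct (V := R_CompleteNormedModule)), hex|].
    apply hP.
    assert (RInt f a y <= L) by (apply hL; exists a; split; [lra | auto]).
    assert (RInt f a0 y <= RInt f a y) by (apply mono; lra).
    change (Rabs (RInt f a y - L) < eps).
    apply Rabs_def1; lra.
Qed.

Lemma Phi_spec (y : R) :
  Phi y <= 1 /\ is_RInt_gen phi_density (Rbar_locally m_infty) (at_point y) (Phi y).
Proof.
  destruct (is_RInt_gen_m_infty_of_bounded phi_density y 1 ex_RInt_phi_density
              (fun t => Rlt_le _ _ (phi_density_pos t))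
              (fun a => RInt_phi_density_le_1 a y))
    as (L & hL1 & hL).
  replace (Phi y) with L; [auto|].
  symmetry; apply (is_RInt_gen_unique (V := R_CompleteNormedModule)), hL.
Qed.

Lemma Phi_Chasles (a b : R) : Phi b = Phi a + RInt phi_density a b.
Proof.
  assert (hab : is_RInt_gen phi_density (at_point a) (at_point b) (RInt phi_density a b)).
  { apply is_RInt_gen_at_point, (RInt_correct (V := R_CompleteNormedModule)).
    apply ex_RInt_phi_density. }
  apply (is_RInt_gen_unique (V := R_CompleteNormedModule)).
  apply (is_RInt_gen_Chasles (V := R_NormedModule) _ a _ _ (proj2 (Phi_spec a)) hab).
Qed.

Lemma Phi_le (a b : R) : a <= b -> Phi a <= Phi b.
Proof.
  intros hab. rewrite (Phi_Chasles a b).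
  assert (0 <= RInt phi_density a b).
  { apply RInt_ge_0; auto using ex_RInt_phi_density.
    intros; apply Rlt_le, phi_density_pos. }
  lra.
Qed.

Lemma Phi_lt_1 (y : R) : Phi y < 1.
Proof.
  destruct (Phi_spec (y + 1)) as [hle _].
  rewrite (Phi_Chasles y (y + 1)) in hle.
  assert (hpos : RInt (fun _ => 0) y (y + 1) < RInt phi_density y (y + 1)).
  { apply RInt_lt; try lra; auto using phi_density_continuous, phi_density_pos.
    intros; apply continuous_const. }
  rewrite RInt_const in hpos.
  change (scal ?u ?v) with (u * v) in hpos.
  lra.
Qed.

Lemma Phi_sub_le (a b : R) : a <= b -> Phi b - Phi a <= b - a.
Proof.
  intros hab. rewrite (Phi_Chasles a b).
  assert (habs := abs_RInt_le_const phi_density a b 1 hab (ex_RInt_phi_density a b)).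
  assert (Rabs (RInt phi_density a b) <= (b - a) * 1).
  { apply habs; intros t _.
    rewrite Rabs_pos_eq by apply Rlt_le, phi_density_pos.
    apply phi_density_le_1. }
  generalize (Rle_abs (RInt phi_density a b)); lra.
Qed.

Lemma F_le (a theta c M : R) : c <= a -> M <= theta ->
  F a theta c <= (a - c) / (1 - Phi (c - M)).
Proof.
  intros hca hM. unfold F.
  assert (hq : 0 < 1 - Phi (c - M)) by (generalize (Phi_lt_1 (c - M)); lra).
  assert (hden : 1 - Phi (c - M) <= 1 - Phi (c - theta)).
  { generalize (Phi_le (c - theta) (c - M) ltac:(lra)); lra. }
  assert (hnum0 : 0 <= Phi (a - theta) - Phi (c - theta)).
  { generalize (Phi_le (c - theta) (a - theta) ltac:(lra)); lra. }
  apply Rle_trans with ((Phi (a - theta) - Phi (c - theta)) / (1 - Phi (c - M))).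
  - apply Rmult_le_compat_l; [exact hnum0|]. apply Rinv_le_contravar; assumption.
  - apply Rmult_le_compat_r; [left; apply Rinv_0_lt_compat, hq|].
    replace (a - c) with ((a - theta) - (c - theta)) by ring.
    apply Phi_sub_le; lra.
Qed.

Theorem theorem1 (c p : R) (hp0 : 0 < p) (hp1 : p < 1) (theta : R -> R)
  (htheta : forall x : R, c < x -> F x (theta x) c = p) :
  filterlim theta (at_right c) (Rbar_locally m_infty).
Proof.
  intros P [M HM].
  set (q := 1 - Phi (c - M)).
  assert (hq : 0 < q) by (generalize (Phi_lt_1 (c - M)); unfold q; lra).
  exists (mkposreal (p * q) (Rmult_lt_0_compat _ _ hp0 hq)).
  intros x hx hcx. apply HM, Rnot_le_lt. intros hMx.
  change (Rabs (x - c) < p * q) in hx. rewrite Rabs_pos_eq in hx by lra.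
  assert (hF := F_le x (theta x) c M ltac:(lra) hMx).
  rewrite htheta in hF by exact hcx. fold q in hF.
  apply (Rmult_le_compat_r q) in hF; [|lra].
  unfold Rdiv in hF. rewrite Rmult_assoc, Rinv_l in hF by lra.
  lra.
Qed.
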